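(* Let $T_1,T_2,\dots$ be independent random variables with $T_i\sim\mathrm{Geometric}(p_i)$, $p_i=(n-i+1)/n$ (i.e. $P(T_i=k)=p_i(1-p_i)^{k-1}$ for $k\ge1$). For any $u>0$ and $\eta\in(0,u)$ there are positive constants $\Delta_2$ and $\beta=\beta(u,\eta)$ such that for all large enough $n$ and all $m<\beta n$, $$P\left(T_1+T_2+\cdots+T_{\lfloor(u-\eta)m\rfloor}>um\right)\le\exp\big[-\eta m\log(n/m)+\Delta_2 m\big].$$ Moreover, $\beta(u,\eta)\downarrow0$ as $\eta\downarrow0$, and for fixed $\eta$, $\beta(u,\eta)$ is a decreasing function of $u$. *)

From HB Require Import structures.
From mathcomp Require Import all_boot all_order all_algebra.
From mathcomp Require Import all_classical all_reals all_analysis.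
Set Implicit Arguments. Unset Strict Implicit. Unset Printing Implicit Defensive.
Import Order.TTheory GRing.Theory Num.Theory.
Local Open Scope classical_set_scope.
Local Open Scope ring_scope.

Definition mutually_independent d (Omega : measurableType d) (R : realType)
  (P : probability Omega R) (I : set nat) (X : nat -> {RV P >-> R}) : Prop :=
  forall (J : seq nat), uniq J -> {subset J <= I} ->
  forall B : nat -> set R, (forall i, measurable (B i)) ->
  P (\bigcap_(i in [set` J]) (X i @^-1` B i)) =
  (\prod_(i <- J) P (X i @^-1` B i))%E.

Definition geometric_law d (Omega : measurableType d) (R : realType)
  (P : probability Omega R) (p : R) (X : {RV P >-> R}) : Prop :=
  forall k : nat, (0 < k)%N ->
  P (X @^-1` [set k%:R]) = (p * (1 - p) ^+ k.-1)%:E.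

Definition p_coupon (R : realType) (n i : nat) : R :=
  ((n%:R - i%:R + 1) / n%:R).

Arguments mutually_independent {d Omega R} P I X.
Arguments geometric_law {d Omega R} P p X.

(* Let k = floor((u - eta) m), L = floor(eta m) + 1 and q = u m / n, so that
   1 - p_i <= q for i <= k.  If T_1 + ... + T_k > u m, the excesses T_i - 1 add
   up to more than eta m, hence some composition s of L into k parts has
   T_i outside {1, ..., s_i} for every i.  By independence and
   P(T_i outside {1, ..., a}) = (1 - p_i)^a <= q^a, each of these events has
   probability at most q^L, and there are at most 2^(k + L) compositions, so the
   tail is at most 2^k (2q)^L.  When 2q <= 1 this is
   exp(-eta m log(n/m) + O(m)); the choice beta(u, eta) = eta / (2 u^2)
   guarantees 2q < 1 and has the required monotonicity and limit. *)

From HB Require Import structures.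
From mathcomp Require Import all_boot all_order all_algebra.
From mathcomp Require Import all_classical all_reals all_analysis.
From mathcomp Require Import ring lra.
Set Implicit Arguments.
Unset Strict Implicit.
Unset Printing Implicit Defensive.

Import Order.TTheory GRing.Theory Num.Theory.
Local Open Scope classical_set_scope.
Local Open Scope ring_scope.

Fixpoint bounded_seqs (k L : nat) : seq (seq nat) :=
  if k is k'.+1 then [seq j :: s | j <- iota 0 L.+1, s <- bounded_seqs k' L]
  else [:: [::]].

Lemma bounded_seqsS k L :
  bounded_seqs k.+1 L = [seq j :: s | j <- iota 0 L.+1, s <- bounded_seqs k L].
Proof. by []. Qed.

Definition compositions (k L : nat) := [seq s <- bounded_seqs k L | sumn s == L].

Lemma mem_bounded_seqs k L s :
  (s \in bounded_seqs k L) = (size s == k) && all (fun x => x <= L)%N s.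
Proof.
elim: k s => [|k IH] [|j s] //; rewrite bounded_seqsS.
- by apply/negbTE/allpairsPdep => -[x [y [_ _]]].
- apply/allpairsPdep/idP => [[x [y [hx hy [-> ->]]]]|].
    by move: hx hy; rewrite mem_iota IH ltnS /= eqSS => -> /andP[-> ->].
  rewrite /= eqSS => /andP[hk /andP[hj hs]]; exists j, s.
  by split; rewrite -?[0%N :: _]/(iota 0 L.+1) ?mem_iota ?ltnS ?hj ?IH ?hk ?hs.
Qed.

Lemma sum_bounded_seqs_expr (R : comPzRingType) (x : R) k L :
  \sum_(s <- bounded_seqs k L) x ^+ sumn s = (\sum_(v < L.+1) x ^+ v) ^+ k.
Proof.
elim: k => [|k IH]; first by rewrite big_seq1 expr0.
rewrite bounded_seqsS big_allpairs_dep exprS -IH big_distrl /=.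
rewrite -[0%N :: _]/(index_iota 0 L.+1) big_mkord.
by apply: eq_bigr => j _; rewrite big_distrr; apply: eq_bigr => s _; rewrite exprD.
Qed.

Lemma sum_halfX_le2 (R : realFieldType) N : \sum_(v < N) (2^-1 : R) ^+ v <= 2.
Proof.
have h0 : 0 <= (2^-1 : R) by rewrite invr_ge0.
move: (subrX1 (2^-1 : R) N) (exprn_ge0 N h0).
by set S := \sum_(_ < _) _; set t := _ ^+ N => e ht; lra.
Qed.

(* Evaluate the generating function of bounded_seqs at 1/2. *)
Lemma size_compositions k L : (size (compositions k L) <= 2 ^ (k + L))%N.
Proof.
pose h : rat := 2^-1.
suff : (size (compositions k L))%:R * h ^+ L <= 2 ^+ k :> rat.
  rewrite -ler_pdivlMr ?exprn_gt0 // ?invr_gt0 // -exprVn invrK -exprD -natrX.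
  by rewrite ler_nat.
rewrite -sum1_size natr_sum mulr_suml.
apply: (@le_trans _ _ (\sum_(s <- bounded_seqs k L) h ^+ sumn s)).
  rewrite big_filter big_mkcond /=; apply: ler_sum => s _.
  by case: eqP => [->|]; rewrite ?mul1r ?exprn_ge0.
rewrite sum_bounded_seqs_expr; apply: lerXn2r; rewrite ?nnegrE ?sum_halfX_le2 //.
by apply: sumr_ge0 => v _; exact: exprn_ge0.
Qed.

Lemma exists_composition_le (e : nat -> nat) k L : (L <= \sum_(j < k) e j)%N ->
  exists2 s, s \in compositions k L & forall j, (j < k)%N -> (nth 0 s j <= e j)%N.
Proof.
elim: k e L => [|k IH] e L.
  by rewrite big_ord0 leqn0 => /eqP ->; exists [::].
rewrite big_ord_recl => hL; set a := minn (e 0%N) L.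
have aL : (a <= L)%N by rewrite geq_minr.
have [|s] := IH (fun j => e j.+1) (L - a)%N.
  by rewrite leq_subLR /a; case: (leqP (e 0%N) L) => _; rewrite ?leq_addr.
rewrite mem_filter mem_bounded_seqs => /and3P[/eqP hsum /eqP hsize hs] hle.
exists (a :: s) => [|[|j]] /=; last exact: hle.
  rewrite mem_filter mem_bounded_seqs /= hsum subnKC // hsize !eqxx aL /=.
  by apply: sub_all hs => x /leq_trans; apply; apply: leq_subr.
by rewrite /a geq_minl.
Qed.

Lemma sum_nth_index {T : eqType} (x0 : T) (J : seq T) (s : seq nat) :
  uniq J -> size s = size J -> (\sum_(j <- J) nth 0 s (index j J))%N = sumn s.
Proof.
move=> uJ hs; rewrite sumnE [RHS](big_nth 0) hs (big_nth x0).
by apply: eq_big_seq => i; rewrite mem_index_iota => /andP[_ /index_uniq ->].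
Qed.

Definition first_naturals {R : numDomainType} (a : nat) : set R :=
  \big[setU/set0]_(j < a) [set j.+1%:R].

Lemma first_naturalsP (R : numDomainType) a (x : R) :
  first_naturals a x <-> exists2 j, (j < a)%N & x = j.+1%:R.
Proof.
rewrite /first_naturals -(bigcup_mkord a (fun j => [set j.+1%:R])).
by split => [[j /= hj ->]|[j hj ->]]; exists j.
Qed.

Lemma measurable_first_naturals (R : realType) a : measurable (@first_naturals R a).
Proof. by apply: bigsetU_measurable => j _; exact: measurable_set1. Qed.

(* With e_i = ceil(x_i) - 1 we have x_i <= e_i + 1 and x_i outside {1, ..., e_i};
   reals that are not positive integers avoid every first_naturals, so no
   integrality of the x_i is needed. *)
Lemma exists_composition_avoiding (R : archiRealFieldType) (J : seq nat)
    (x : nat -> R) (L : nat) (y : R) :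
  (size J + L)%:R - 1 <= y -> y < \sum_(j <- J) x j ->
  exists2 s, s \in compositions (size J) L &
    forall j, j \in J -> ~ first_naturals (nth 0 s (index j J)) (x j).
Proof.
move=> hy hx; pose e i := `|Num.ceil (x (nth 0 J i)) - 1|%N.
have he i : x (nth 0 J i) <= (e i)%:R + 1.
  have := ceil_ge (x (nth 0 J i)).
  have := ler_norm (Num.ceil (x (nth 0 J i)) - 1).
  by rewrite natr_absz -(ler_int R) intrB; lra.
have [|s hs hle] := @exists_composition_le e (size J) L.
  rewrite -ltnS -(ltr_nat R) -addn1 natrD natr_sum.
  have : \sum_(j <- J) x j <= \sum_(i < size J) ((e i)%:R + 1).
    by rewrite (big_nth 0) big_mkord; apply: ler_sum => i _; exact: he.
  by rewrite big_split /= sumr_const card_ord natrD in hy *; lra.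
exists s => // j hj /first_naturalsP[a ha hxj].
have hi : (index j J < size J)%N by rewrite index_mem.
have ceil_a : Num.ceil (a.+1%:R : R) = a.+1 by rewrite -[_%:R]/(a.+1%:~R) intrKceil.
by have := hle _ hi; rewrite /e nth_index // hxj ceil_a -addn1 PoszD addrK leqNgt ha.
Qed.

Section geometric_law.
Context d (Omega : measurableType d) (R : realType) (P : probability Omega R).
Variables (p : R) (X : {RV P >-> R}).
Hypothesis lawX : geometric_law P p X.

Lemma geometric_first_naturals a :
  P (X @^-1` first_naturals a) = (1 - (1 - p) ^+ a)%:E.
Proof.
rewrite /first_naturals -(bigcup_mkord a (fun j => [set j.+1%:R])).
rewrite preimage_bigcup bigcup_mkord measure_bigsetU_ord //=.
- under eq_bigr => j _ do rewrite lawX //=.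
  by rewrite sumEFin -mulr_sumr; congr EFin; rewrite -[RHS]opprB subrX1; ring.
- move=> i j _ _ [w [/= -> /eqP]]; rewrite eqr_nat eqSS => /eqP; exact: val_inj.
Qed.

Lemma geometric_tail a : P (X @^-1` ~` first_naturals a) = ((1 - p) ^+ a)%:E.
Proof.
rewrite -preimage_setC probability_setC ?geometric_first_naturals -?EFinB.
  by congr EFin; ring.
exact: measurable_funPTI (measurable_first_naturals a).
Qed.

End geometric_law.

Section independent_geometric_sum.
Context d (Omega : measurableType d) (R : realType) (P : probability Omega R).
Variables (I : set nat) (X : nat -> {RV P >-> R}) (p : nat -> R) (J : seq nat) (q : R).
Hypotheses (indX : mutually_independent P I X) (uJ : uniq J) (JI : {subset J <= I}).
Hypotheses (lawX : forall j, j \in J -> geometric_law P (p j) (X j))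
  (pq : forall j, j \in J -> 0 <= 1 - p j <= q) (q0 : 0 <= q).

Definition avoiding_event (s : seq nat) : set Omega :=
  \bigcap_(j in [set` J]) X j @^-1` ~` first_naturals (nth 0 s (index j J)).

Lemma measurable_avoiding_event s : measurable (avoiding_event s).
Proof.
apply: bigcap_measurableType => j _.
exact: measurable_funPTI (measurableC (measurable_first_naturals _)).
Qed.

Lemma avoiding_event_le s : size s = size J ->
  (P (avoiding_event s) <= (q ^+ sumn s)%:E)%E.
Proof.
move=> hs; rewrite /avoiding_event indX //; last first.
  by move=> j; exact: measurableC (measurable_first_naturals _).
rewrite big_seq; under eq_bigr => j hj do rewrite (geometric_tail (lawX hj)).
rewrite prodEFin lee_fin -(sum_nth_index 0%N uJ hs) -prodrXr [leRHS]big_seq.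
apply: ler_prod => j hj.
have /andP[p0 pj] := pq hj.
by rewrite exprn_ge0 //= lerXn2r // nnegrE (le_trans p0).
Qed.

Lemma geometric_sum_tail L (y : R) : (size J + L)%:R - 1 <= y ->
  (P [set w | (y < \sum_(j <- J) X j w)%R] <= (2 ^+ size J * (2 * q) ^+ L)%:E)%E.
Proof.
move=> hy; set V := compositions (size J) L.
have mE : measurable [set w | y < \sum_(j <- J) X j w].
  rewrite -[X in measurable X]setTI.
  have -> : [set w | y < \sum_(j <- J) X j w] =
      (fun w => \sum_(j <- J) X j w) @^-1` `]y, +oo[.
    by apply/seteqP; split => w /=; rewrite in_itv /= andbT.
  by apply: measurable_sum => //= j; exact: measurable_funP.
have cover : [set w | y < \sum_(j <- J) X j w] `<=`
    \big[setU/set0]_(k < size V) avoiding_event (nth [::] V k).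
  move=> w /= hw; have [s hs avoid] := exists_composition_avoiding hy hw.
  rewrite -(bigcup_mkord _ (fun k => avoiding_event (nth [::] V k))).
  exists (index s V); first by rewrite /= index_mem.
  by rewrite nth_index // => j /= /avoid.
apply: le_trans (@content_subadditive _ _ _ P _
  (fun k => avoiding_event (nth [::] V k)) _ _ mE cover) _.
  by move=> k _; exact: measurable_avoiding_event.
apply: (@le_trans _ _ (\sum_(k < size V) (q ^+ L)%:E)).
  apply: lee_sum => k _; have := mem_nth [::] (ltn_ord k).
  rewrite mem_filter mem_bounded_seqs => /andP[/eqP <- /andP[/eqP hs _]].
  exact: avoiding_event_le.
rewrite sumEFin lee_fin sumr_const card_ord -[_ *+ size V]mulr_natl.
rewrite exprMn mulrA -exprD.
by rewrite ler_wpM2r ?exprn_ge0 // -natrX ler_nat size_compositions.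
Qed.

End independent_geometric_sum.

Lemma coupon_exp_bound (R : realType) (u eta : R) (n m k L : nat) :
  0 < u -> 0 < eta -> (0 < m)%N -> 2 * u * m%:R < n%:R ->
  k%:R <= u * m%:R -> eta * m%:R < L%:R ->
  2 ^+ k * (2 * (u * m%:R / n%:R)) ^+ L <=
  expR (- eta * m%:R * ln (n%:R / m%:R) + (eta * `|ln (2 * u)| + u * ln 2) * m%:R).
Proof.
move=> u0 eta0 m0 hn hk hL.
have mpos : 0 < m%:R :> R by rewrite ltr0n.
have npos : 0 < n%:R :> R by apply: le_lt_trans hn; rewrite !mulr_ge0 ?ltW.
have nm0 : 0 < n%:R / m%:R :> R by rewrite divr_gt0.
have q2_gt0 : 0 < 2 * (u * m%:R / n%:R) by rewrite !mulr_gt0 ?invr_gt0.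
have q2_le1 : 2 * (u * m%:R / n%:R) <= 1 by rewrite !mulrA ler_pdivrMr ?mul1r ?ltW.
have ln_q2 : ln (2 * (u * m%:R / n%:R)) = ln (2 * u) - ln (n%:R / m%:R).
  have u2 : 0 < 2 * u by rewrite mulr_gt0.
  rewrite -lnV ?posrE // -lnM ?posrE ?invr_gt0 //.
  by rewrite invf_div !mulrA.
have ln2 : 0 < ln (2 : R) by rewrite ln_gt0 // ltr1n.
have expR_ln_natl (x : R) j : 0 < x -> x ^+ j = expR (j%:R * ln x).
  by move=> x0; rewrite expRM_natl lnK.
rewrite !expR_ln_natl // -expRD ler_expR ln_q2.
have lnq2_le0 : ln (2 * u) - ln (n%:R / m%:R) <= 0 by rewrite -ln_q2 ln_le0.
have h1 : L%:R * (ln (2 * u) - ln (n%:R / m%:R)) <=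
          eta * m%:R * (ln (2 * u) - ln (n%:R / m%:R)).
  by apply: ler_wnM2r => //; exact: ltW.
have h2 : k%:R * ln 2 <= u * m%:R * ln 2 by apply: ler_wpM2r; [exact: ltW | exact: hk].
have h3 : eta * m%:R * ln (2 * u) <= eta * m%:R * `|ln (2 * u)|.
  by apply: ler_wpM2l (ler_norm _); rewrite mulr_ge0 ?ltW.
nra.
Qed.

Lemma subr_p_coupon (R : realType) n i : (0 < n)%N ->
  1 - p_coupon R n i = (i%:R - 1) / n%:R.
Proof. by move=> n0; rewrite /p_coupon; field; rewrite pnatr_eq0 -lt0n. Qed.

Definition beta_coupon (R : realType) (u eta : R) := eta / (2 * u ^+ 2).

Definition delta_coupon (R : realType) (u eta : R) :=
  eta * `|ln (2 * u)| + u * ln 2.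

Lemma coupon_sum_tail (R : realType) (u eta : R) (n m : nat) :
  0 < u -> 0 < eta < u -> (0 < m)%N -> m%:R < beta_coupon u eta * n%:R ->
  forall d (Omega : measurableType d) (P : probability Omega R)
         (T : nat -> {RV P >-> R}),
  mutually_independent P [set i | (1 <= i <= n)%N] T ->
  (forall i, (1 <= i <= n)%N -> geometric_law P (p_coupon R n i) (T i)) ->
  (P [set w | (u * m%:R < \sum_(1 <= i < (Num.truncn ((u - eta) * m%:R)).+1) T i w)%R]
   <= (expR (- eta * m%:R * ln (n%:R / m%:R) + delta_coupon u eta * m%:R))%:E)%E.
Proof.
move=> u0 /andP[eta0 etau] m0 hm d Omega P T indT lawT.
set k := Num.truncn _; set L := (Num.truncn (eta * m%:R)).+1.
have mpos : 0 < m%:R :> R by rewrite ltr0n.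
have h2um : 2 * u * m%:R < n%:R.
  move: hm; rewrite /beta_coupon mulrAC ltr_pdivlMr ?mulr_gt0 ?exprn_gt0 //.
  have : eta * n%:R <= u * n%:R by rewrite ler_wpM2r ?ler0n ?ltW.
  nra.
have hk : k%:R <= (u - eta) * m%:R by rewrite truncn_le mulr_ge0 ?subr_ge0 ?ltW.
have hkn : (k <= n)%N by rewrite -(ler_nat R); nra.
have hL : eta * m%:R < L%:R := truncnS_gt _.
have n0 : (0 < n)%N by rewrite -(ltr_nat R); nra.
have hJ i : i \in index_iota 1 k.+1 -> (1 <= i <= k)%N.
  by rewrite mem_index_iota ltnS.
have hJn i : i \in index_iota 1 k.+1 -> (1 <= i <= n)%N.
  by move=> /hJ /andP[-> /leq_trans]; apply.
apply: le_trans (geometric_sum_tail (q := u * m%:R / n%:R) (L := L) indT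
  (iota_uniq _ _) _ _ _ _ _) _.
- by move=> i /hJn; rewrite inE.
- by move=> i /hJn; exact: lawT.
- move=> i /hJ /andP[i1 ik]; rewrite subr_p_coupon // ler_pM2r ?invr_gt0 ?ltr0n //.
  rewrite divr_ge0 ?subr_ge0 ?ler1n //=; rewrite -(ler_nat R) in ik; nra.
- by rewrite divr_ge0 // mulr_ge0 // ltW.
- have : (Num.truncn (eta * m%:R))%:R <= eta * m%:R.
    by rewrite truncn_le mulr_ge0 // ltW.
  by rewrite size_iota subn1 natrD /L -natr1; lra.
by rewrite lee_fin size_iota subn1 coupon_exp_bound //; nra.
Qed.

Lemma beta_coupon_gt0 (R : realType) (u eta : R) :
  0 < u -> 0 < eta -> 0 < beta_coupon u eta.
Proof. by move=> u0 eta0; rewrite divr_gt0 // mulr_gt0 // exprn_gt0. Qed.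

Lemma delta_coupon_gt0 (R : realType) (u eta : R) :
  0 < u -> 0 < eta -> 0 < delta_coupon u eta.
Proof.
move=> u0 eta0; apply: ltr_wpDl; first by rewrite mulr_ge0 // ltW.
by rewrite mulr_gt0 // ln_gt0 // ltr1n.
Qed.

Lemma beta_coupon_nondecreasing_eta (R : realType) (u eta1 eta2 : R) :
  eta1 <= eta2 -> beta_coupon u eta1 <= beta_coupon u eta2.
Proof. by move=> le12; apply: ler_wpM2r; rewrite // invr_ge0 mulr_ge0 // sqr_ge0. Qed.

Lemma beta_coupon_nonincreasing_u (R : realType) (eta u1 u2 : R) :
  0 < eta -> 0 < u1 -> u1 <= u2 -> beta_coupon u2 eta <= beta_coupon u1 eta.
Proof.
move=> eta0 u10 u12; have u20 := lt_le_trans u10 u12.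
apply: ler_wpM2l; first exact: ltW.
rewrite lef_pV2 ?posrE ?mulr_gt0 ?exprn_gt0 //.
by apply: ler_wpM2l => //; rewrite lerXn2r // nnegrE ltW.
Qed.

Lemma beta_coupon_cvg0 (R : realType) (u : R) :
  beta_coupon u eta @[eta --> 0^'+] --> 0.
Proof.
apply: (@cvg_at_right_filter R R^o).
rewrite -[X in _ --> X](mul0r (2 * u ^+ 2)^-1); exact: cvgMl cvg_id.
Qed.

Theorem lemma3 (R : realType) :
  exists beta : R -> R -> R,
    (forall u eta : R, 0 < u -> 0 < eta < u ->
      0 < beta u eta /\
      exists Delta2 : R, 0 < Delta2 /\
      exists N : nat, forall n : nat, (N <= n)%N ->
      forall m : nat, (0 < m)%N -> m%:R < beta u eta * n%:R ->
      forall (d : measure_display) (Omega : measurableType d)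
             (P : probability Omega R) (T : nat -> {RV P >-> R}),
        mutually_independent P [set i | (1 <= i <= n)%N] T ->
        (forall i : nat, (1 <= i <= n)%N -> geometric_law P (p_coupon R n i) (T i)) ->
        (P [set w | (u * m%:R < \sum_(1 <= i < (Num.truncn ((u - eta) * m%:R)).+1) T i w)%R]
         <= (expR (- eta * m%:R * ln (n%:R / m%:R) + Delta2 * m%:R))%:E)%E)
    /\ (forall u eta1 eta2 : R, 0 < u -> 0 < eta1 -> eta1 <= eta2 -> eta2 < u ->
          beta u eta1 <= beta u eta2)
    /\ (forall u : R, 0 < u ->
          beta u eta @[eta --> 0^'+] --> 0)
    /\ (forall eta u1 u2 : R, 0 < eta -> eta < u1 -> u1 <= u2 ->
          beta u2 eta <= beta u1 eta).
Proof.
exists (@beta_coupon R); split; [|split; [|split]].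
- move=> u eta u0 /[dup] /andP[eta0 _] heta.
  split; first exact: beta_coupon_gt0.
  exists (delta_coupon u eta); split; first exact: delta_coupon_gt0.
  by exists 0%N => n _ m m0 hm; exact: coupon_sum_tail.
- by move=> u eta1 eta2 _ _ le12 _; exact: beta_coupon_nondecreasing_eta.
- by move=> u _; exact: beta_coupon_cvg0.
- move=> eta u1 u2 eta0 eta_u1; apply: beta_coupon_nonincreasing_u => //.
  exact: lt_trans eta_u1.
Qed.
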